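(* Let $\Omega=G/K$ be an irreducible bounded symmetric domain and $\mathcal A\in\mathrm{Gr}(p,T_o\Omega)$ such that $\Sigma(\mathcal A)=cH_0$ for some constant $c$. Then the function $\mathcal B\mapsto\|\Sigma(\mathcal B)\|^2_{\mathfrak g,\mathfrak l}$ on $\mathrm{Gr}(p,T_o\Omega)$ achieves its absolute minimum at $\mathcal A$.
   Context: Data: $\mathfrak g=\mathfrak l\oplus\mathfrak p$ Cartan decomposition of $\mathrm{Lie}(G)$, $H_0$ central in $\mathfrak l$ with $\mathrm{ad}(H_0)^2$ the Cartan involution and $\mathrm{ad}(H_0)|_{\mathfrak p}$ the complex structure at $o=eK$, $\mathfrak p^+\cong T^{1,0}_o\Omega$ the $\sqrt{-1}$-eigenspace of $\mathrm{ad}H_0$ in $\mathfrak p^{\mathbb C}$, with Hermitian form $(\alpha,\overline\beta)_{\mathcal K}$ ($\mathcal K$ the Killing form). $\mathrm{Gr}(p,T_o\Omega)$ is the Grassmannian of complex $p$-planes in $\mathfrak p^+$. For $\mathcal B$ with unitary basis $(e_i)$, $\Sigma(\mathcal B)=\sqrt{-1}\sum_i[e_i,\overline{e_i}]$. $\|\cdot\|_{\mathfrak g,\mathfrak l}$ is the norm on $\mathfrak l^{\mathbb C}$ from the Hermitian form $h_{\mathfrak g,\mathfrak l}(\lambda,\mu)=(\lambda,\overline\mu)_{\mathcal K}$. *)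

(* real Lie algebras given by real structure constants on R^n,
   complexification inside C^n with C = R[i] (mathcomp-real-closed). *)
From HB Require Import structures.
From mathcomp Require Import all_boot all_order all_algebra.
From mathcomp Require Import complex.
Set Implicit Arguments. Unset Strict Implicit. Unset Printing Implicit Defensive.
Import Order.TTheory GRing.Theory Num.Theory.
Local Open Scope ring_scope.

Section LieData.
Variables (R : rcfType) (n : nat).
(* structure constants: [e_i, e_j] = cst i j, a real vector *)
Variable cst : 'I_n -> 'I_n -> 'rV[R]_n.

Definition toC (r : R) : R[i] := (r%:C)%C.
Definition mapC m k (M : 'M[R]_(m, k)) : 'M[R[i]]_(m, k) := map_mx toC M.
Definition conjv m k (M : 'M[R[i]]_(m, k)) : 'M[R[i]]_(m, k) :=
  map_mx (fun z => (z^*)%C) M.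

Definition brR (x y : 'rV[R]_n) : 'rV[R]_n :=
  \sum_(i < n) \sum_(j < n) (x 0 i * y 0 j) *: cst i j.
Definition brC (x y : 'rV[R[i]]_n) : 'rV[R[i]]_n :=
  \sum_(i < n) \sum_(j < n) (x 0 i * y 0 j) *: mapC (cst i j).

Definition is_lie_algebra : Prop :=
  (forall x y : 'rV[R]_n, brR x y = - brR y x) /\
  (forall x y z : 'rV[R]_n,
      brR x (brR y z) + brR y (brR z x) + brR z (brR x y) = 0).

(* matrix of ad x (row-vector convention: v *m adR x = [x, v]) *)
Definition adR (x : 'rV[R]_n) : 'M[R]_n :=
  \matrix_(k < n, j < n) brR x (delta_mx 0 k) 0 j.
Definition adC (x : 'rV[R[i]]_n) : 'M[R[i]]_n :=
  \matrix_(k < n, j < n) brC x (delta_mx 0 k) 0 j.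

Definition kilR (x y : 'rV[R]_n) : R := \tr (adR x *m adR y).
Definition kilC (x y : 'rV[R[i]]_n) : R[i] := \tr (adC x *m adC y).

(* ideals (subspaces = row spaces of square matrices) *)
Definition is_ideal (I : 'M[R]_n) : Prop :=
  forall x y : 'rV[R]_n, (y <= I)%MS -> (brR x y <= I)%MS.

Definition is_simple : Prop :=
  (exists x y : 'rV[R]_n, brR x y != 0) /\
  (forall I : 'M[R]_n, is_ideal I -> \rank I = 0%N \/ \rank I = n).

Definition is_cartan_decomposition (L P : 'M[R]_n) : Prop :=
  (L + P == (1%:M : 'M[R]_n))%MS /\ (L :&: P == (0 : 'M[R]_n))%MS /\
  (forall x y, (x <= L)%MS -> (y <= L)%MS -> (brR x y <= L)%MS) /\
  (forall x y, (x <= L)%MS -> (y <= P)%MS -> (brR x y <= P)%MS) /\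
  (forall x y, (x <= P)%MS -> (y <= P)%MS -> (brR x y <= L)%MS) /\
  (forall x, (x <= L)%MS -> x != 0 -> kilR x x < 0) /\
  (forall x, (x <= P)%MS -> x != 0 -> 0 < kilR x x).

Definition is_H0 (L P : 'M[R]_n) (H0 : 'rV[R]_n) : Prop :=
  (H0 <= L)%MS /\
  (forall x, (x <= L)%MS -> brR H0 x = 0) /\
  (forall x, (x <= P)%MS -> brR H0 (brR H0 x) = - x).

Definition in_pplus (P : 'M[R]_n) (H0 : 'rV[R]_n) (v : 'rV[R[i]]_n) : Prop :=
  (v <= mapC P)%MS /\ brC (mapC H0) v = ('i)%C *: v.

Definition hermK (a b : 'rV[R[i]]_n) : R[i] := kilC a (conjv b).

(* the rows of E form a unitary basis of a complex p-plane in p^+,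
   i.e. span E is a point of Gr(p, T_o Omega) *)
Definition unitary_frame (P : 'M[R]_n) (H0 : 'rV[R]_n) (p : nat)
    (E : 'M[R[i]]_(p, n)) : Prop :=
  (forall i, in_pplus P H0 (row i E)) /\
  (forall i j, hermK (row i E) (row j E) = (i == j)%:R).

Definition Sigma (p : nat) (E : 'M[R[i]]_(p, n)) : 'rV[R[i]]_n :=
  ('i)%C *: \sum_(i < p) brC (row i E) (conjv (row i E)).

(* squared norm on l^C induced by the Killing form; sign chosen so that it
   is positive definite on l^C *)
Definition normsq_gl (lam : 'rV[R[i]]_n) : R[i] := - kilC lam (conjv lam).

End LieData.

From HB Require Import structures.
From mathcomp Require Import all_boot all_order all_algebra.
From mathcomp Require Import complex.
From mathcomp Require Import ring lra.
Import Order.TTheory GRing.Theory Num.Theory.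
Local Open Scope ring_scope.
Set Implicit Arguments. Unset Strict Implicit. Unset Printing Implicit Defensive.

(* Write a unit vector e of p^+ as e = a + ib with a, b in p; the eigenvalue equation
   [H0, e] = ie says [H0, a] = -b and [H0, b] = a.  Then i[e, conj e] = [a, b] - [b, a]
   is real and lies in l because [p, p] is contained in l, and invariance of the Killing
   form K gives K(i[e, conj e], H0) = -(K(a, a) + K(b, b)) = -(e, conj e)_K = -1.  So for
   every unitary frame B, Sigma(B) is a vector of l with K(Sigma(B), H0) = -p.  When
   Sigma(A) = c H0, the difference Sigma(B) - Sigma(A) is therefore K-orthogonal to
   Sigma(A), and since -K is positive definite on l, Pythagoras gives
   |Sigma(B)|^2 = |Sigma(A)|^2 + |Sigma(B) - Sigma(A)|^2 >= |Sigma(A)|^2. *)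

Notation mxRe := (map_mx (@complex.Re _)).
Notation mxIm := (map_mx (@complex.Im _)).

Section ComplexMatrixParts.
Variables (R : rcfType) (m k : nat).
Implicit Types (M : 'M[R[i]]_(m, k)) (A : 'M[R]_(m, k)).

Lemma mxRe_mapC A : mxRe (mapC A) = A.
Proof. by apply/matrixP => a b; rewrite !mxE. Qed.

Lemma mxIm_mapC A : mxIm (mapC A) = 0.
Proof. by apply/matrixP => a b; rewrite !mxE. Qed.

Lemma mxRe_conjv M : mxRe (conjv M) = mxRe M.
Proof. by apply/matrixP => a b; rewrite !mxE; case: (M a b). Qed.

Lemma mxIm_conjv M : mxIm (conjv M) = - mxIm M.
Proof. by apply/matrixP => a b; rewrite !mxE; case: (M a b). Qed.

Lemma mxRe_scale_i M : mxRe ('i%C *: M) = - mxIm M.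
Proof. by apply/matrixP => a b; rewrite !mxE; case: (M a b) => x y /=; ring. Qed.

Lemma mxIm_scale_i M : mxIm ('i%C *: M) = mxRe M.
Proof. by apply/matrixP => a b; rewrite !mxE; case: (M a b) => x y /=; ring. Qed.

Lemma mxRe_scale_toC c M : mxRe (toC c *: M) = c *: mxRe M.
Proof. by apply/matrixP => a b; rewrite !mxE; case: (M a b) => x y /=; ring. Qed.

Lemma mxRe_mul l M (N : 'M[R[i]]_(k, l)) :
  mxRe (M *m N) = mxRe M *m mxRe N - mxIm M *m mxIm N.
Proof.
apply/matrixP => a b; rewrite !mxE raddf_sum -sumrB; apply: eq_bigr => j _.
by rewrite !mxE; case: (M a j) => ? ?; case: (N j b).
Qed.

Lemma mxIm_mul l M (N : 'M[R[i]]_(k, l)) :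
  mxIm (M *m N) = mxRe M *m mxIm N + mxIm M *m mxRe N.
Proof.
apply/matrixP => a b; rewrite !mxE raddf_sum -big_split; apply: eq_bigr => j _.
by rewrite !mxE; case: (M a j) => ? ?; case: (N j b) => ? ? /=; ring.
Qed.

Lemma mxRe_delta a b : mxRe (delta_mx a b : 'M[R[i]]_(m, k)) = delta_mx a b.
Proof. by apply/matrixP => u v; rewrite !mxE; case: (_ && _). Qed.

Lemma mxIm_delta a b : mxIm (delta_mx a b : 'M[R[i]]_(m, k)) = 0.
Proof. by apply/matrixP => u v; rewrite !mxE; case: (_ && _). Qed.

End ComplexMatrixParts.

Lemma Re_mxtrace (R : rcfType) k (M : 'M[R[i]]_k) :
  complex.Re (\tr M) = \tr (mxRe M).
Proof. by rewrite raddf_sum; apply: eq_bigr => j _; rewrite mxE. Qed.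

Lemma Im_mxtrace (R : rcfType) k (M : 'M[R[i]]_k) :
  complex.Im (\tr M) = \tr (mxIm M).
Proof. by rewrite raddf_sum; apply: eq_bigr => j _; rewrite mxE. Qed.

Lemma brR_is_bilinear (R : rcfType) n (cst : 'I_n -> 'I_n -> 'rV[R]_n) :
  bilinear_for (GRing.Scale.Law.clone _ _ *:%R _)
    (GRing.Scale.Law.clone _ _ *:%R _) (brR cst).
Proof.
split=> [y|x] a u v /=; rewrite /brR scaler_sumr -big_split; apply: eq_bigr => i _;
  rewrite scaler_sumr -big_split; apply: eq_bigr => j _;
  rewrite /= !mxE scalerA -scalerDl.
- by rewrite mulrDl mulrA.
- by rewrite mulrDr mulrCA.
Qed.

HB.instance Definition _ (R : rcfType) n (cst : 'I_n -> 'I_n -> 'rV[R]_n) :=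
  bilinear_isBilinear.Build R _ _ _ _ _ (brR cst) (brR_is_bilinear cst).

Lemma adR_is_linear (R : rcfType) n (cst : 'I_n -> 'I_n -> 'rV[R]_n) :
  linear (adR cst).
Proof. by move=> a x y; apply/matrixP => k j; rewrite !mxE linearDl linearZl_LR !mxE. Qed.

HB.instance Definition _ (R : rcfType) n (cst : 'I_n -> 'I_n -> 'rV[R]_n) :=
  GRing.isLinear.Build R _ _ _ (adR cst) (adR_is_linear cst).

Lemma kilR_is_bilinear (R : rcfType) n (cst : 'I_n -> 'I_n -> 'rV[R]_n) :
  bilinear_for (GRing.Scale.Law.clone _ _ *%R _)
    (GRing.Scale.Law.clone _ _ *%R _) (kilR cst).
Proof.
split=> [z|z] a x y /=; rewrite /kilR linearP.
- by rewrite mulmxDl -scalemxAl mxtraceD mxtraceZ.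
- by rewrite mulmxDr -scalemxAr mxtraceD mxtraceZ.
Qed.

HB.instance Definition _ (R : rcfType) n (cst : 'I_n -> 'I_n -> 'rV[R]_n) :=
  bilinear_isBilinear.Build R _ _ _ _ _ (kilR cst) (kilR_is_bilinear cst).

Section LieAlgebra.
Variables (R : rcfType) (n : nat) (cst : 'I_n -> 'I_n -> 'rV[R]_n).
Hypothesis lie : is_lie_algebra cst.

Lemma brRxx x : brR cst x x = 0.
Proof.
have /eqP : brR cst x x *+ 2 = 0 by rewrite mulr2n {1}lie.1 addNr.
by rewrite -scaler_nat scaler_eq0 pnatr_eq0 => /eqP.
Qed.

Lemma mul_adR x v : v *m adR cst x = brR cst x v.
Proof.
rewrite [in RHS](row_sum_delta v) linear_sumr; apply/rowP => j.
rewrite !mxE summxE; apply: eq_bigr => k _.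
by rewrite !mxE linearZr_LR mxE.
Qed.

(* With the row-vector convention, [ad] is an anti-homomorphism of matrices. *)
Lemma adR_brR x y :
  adR cst (brR cst x y) = adR cst y *m adR cst x - adR cst x *m adR cst y.
Proof.
apply/row_matrixP => k; rewrite !rowE mulmxBr !mulmxA !mul_adR.
have := lie.2 x y (delta_mx 0 k).
rewrite (lie.1 (delta_mx 0 k) x) (lie.1 (delta_mx 0 k) (brR cst x y)) linearNr.
by move/eqP; rewrite subr_eq0 => /eqP ->.
Qed.

Lemma kilRC x y : kilR cst x y = kilR cst y x.
Proof. exact: mxtrace_mulC. Qed.

Lemma kilR_brR x y z : kilR cst (brR cst x y) z = - kilR cst y (brR cst x z).
Proof.
have cyclic : \tr (adR cst x *m adR cst y *m adR cst z) =
              \tr (adR cst y *m adR cst z *m adR cst x).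
  by rewrite -mulmxA mxtrace_mulC.
by rewrite /kilR !adR_brR mulmxBl mulmxBr !mulmxA !raddfB /= cyclic; ring.
Qed.

End LieAlgebra.

Section Complexification.
Variables (R : rcfType) (n : nat) (cst : 'I_n -> 'I_n -> 'rV[R]_n).
Implicit Types x y : 'rV[R[i]]_n.

Lemma mxRe_brC x y :
  mxRe (brC cst x y) = brR cst (mxRe x) (mxRe y) - brR cst (mxIm x) (mxIm y).
Proof.
apply/rowP => b; rewrite !mxE !summxE raddf_sum -sumrB; apply: eq_bigr => i _.
rewrite !summxE raddf_sum -sumrB; apply: eq_bigr => j _.
by rewrite !mxE; case: (x 0 i) => ? ?; case: (y 0 j) => ? ? /=; ring.
Qed.

Lemma mxIm_brC x y :
  mxIm (brC cst x y) = brR cst (mxRe x) (mxIm y) + brR cst (mxIm x) (mxRe y).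
Proof.
apply/rowP => b; rewrite !mxE !summxE raddf_sum -big_split; apply: eq_bigr => i _.
rewrite !summxE raddf_sum -big_split; apply: eq_bigr => j _.
by rewrite !mxE; case: (x 0 i) => ? ?; case: (y 0 j) => ? ? /=; ring.
Qed.

Lemma mxRe_adC x : mxRe (adC cst x) = adR cst (mxRe x).
Proof.
apply/matrixP => k j.
transitivity (mxRe (brC cst x (delta_mx 0 k)) 0 j); first by rewrite !mxE.
by rewrite mxRe_brC mxRe_delta mxIm_delta linear0r subr0 mxE.
Qed.

Lemma mxIm_adC x : mxIm (adC cst x) = adR cst (mxIm x).
Proof.
apply/matrixP => k j.
transitivity (mxIm (brC cst x (delta_mx 0 k)) 0 j); first by rewrite !mxE.
by rewrite mxIm_brC mxRe_delta mxIm_delta linear0r add0r mxE.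
Qed.

Lemma Re_kilC x y :
  complex.Re (kilC cst x y) = kilR cst (mxRe x) (mxRe y) - kilR cst (mxIm x) (mxIm y).
Proof. by rewrite Re_mxtrace mxRe_mul !mxRe_adC !mxIm_adC raddfB. Qed.

Lemma Im_kilC x y :
  complex.Im (kilC cst x y) = kilR cst (mxRe x) (mxIm y) + kilR cst (mxIm x) (mxRe y).
Proof. by rewrite Im_mxtrace mxIm_mul !mxRe_adC !mxIm_adC raddfD. Qed.

Lemma Re_hermK_diag x :
  complex.Re (hermK cst x x) = kilR cst (mxRe x) (mxRe x) + kilR cst (mxIm x) (mxIm x).
Proof. by rewrite Re_kilC mxRe_conjv mxIm_conjv linearNr opprK. Qed.

Lemma normsq_gl_real x : mxIm x = 0 ->
  normsq_gl cst x = toC (- kilR cst (mxRe x) (mxRe x)).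
Proof.
move=> Imx; apply/eqP; rewrite eq_complex !raddfN /= Re_kilC Im_kilC.
by rewrite mxRe_conjv mxIm_conjv Imx oppr0 !linear0l linear0r subr0 addr0 oppr0 !eqxx.
Qed.

End Complexification.

Section FramesOfPplus.
Variables (R : rcfType) (n : nat) (cst : 'I_n -> 'I_n -> 'rV[R]_n).
Variables (P : 'M[R]_n) (H0 : 'rV[R]_n).

Lemma pplus_parts e : in_pplus cst P H0 e ->
  [/\ (mxRe e <= P)%MS, (mxIm e <= P)%MS,
      brR cst H0 (mxRe e) = - mxIm e & brR cst H0 (mxIm e) = mxRe e].
Proof.
move=> [eP eig]; split.
- by case/submxP: eP => w ->; rewrite mxRe_mul mxRe_mapC mxIm_mapC mulmx0 subr0 submxMl.
- by case/submxP: eP => w ->; rewrite mxIm_mul mxRe_mapC mxIm_mapC mulmx0 add0r submxMl.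
- have := congr1 mxRe eig.
  by rewrite mxRe_brC mxRe_scale_i mxRe_mapC mxIm_mapC linear0l subr0.
- have := congr1 mxIm eig.
  by rewrite mxIm_brC mxIm_scale_i mxRe_mapC mxIm_mapC linear0l addr0.
Qed.

Variable p : nat.
Implicit Type E : 'M[R[i]]_(p, n).

Lemma mxRe_Sigma E : mxRe (Sigma cst E) =
  \sum_(k < p) (brR cst (mxRe (row k E)) (mxIm (row k E))
                - brR cst (mxIm (row k E)) (mxRe (row k E))).
Proof.
rewrite /Sigma mxRe_scale_i raddf_sum -sumrN /=; apply: eq_bigr => k _.
by rewrite mxIm_brC mxRe_conjv mxIm_conjv linearNr opprD opprK addrC.
Qed.

Lemma mxIm_Sigma E : mxIm (Sigma cst E) =
  \sum_(k < p) (brR cst (mxRe (row k E)) (mxRe (row k E))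
                + brR cst (mxIm (row k E)) (mxIm (row k E))).
Proof.
rewrite /Sigma mxIm_scale_i raddf_sum /=; apply: eq_bigr => k _.
by rewrite mxRe_brC mxRe_conjv mxIm_conjv linearNr opprK.
Qed.

End FramesOfPplus.

Section CartanDecomposition.
Variables (R : rcfType) (n : nat) (cst : 'I_n -> 'I_n -> 'rV[R]_n).
Variables (L P : 'M[R]_n) (H0 : 'rV[R]_n) (p : nat).
Hypothesis lie : is_lie_algebra cst.
Hypothesis cartan : is_cartan_decomposition cst L P.
Implicit Type E : 'M[R[i]]_(p, n).

Lemma kilR_le0 x : (x <= L)%MS -> kilR cst x x <= 0.
Proof.
have [_ [_ [_ [_ [_ [negL _]]]]]] := cartan.
move=> xL; have [->|x_neq0] := eqVneq x 0; first by rewrite linear0l.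
exact/ltW/negL.
Qed.

Lemma kilR_le_orthogonal x y : (x - y <= L)%MS -> kilR cst (x - y) y = 0 ->
  kilR cst x x <= kilR cst y y.
Proof.
move=> /kilR_le0; rewrite !linearBl !linearBr /= (kilRC _ y x); lra.
Qed.

Lemma Sigma_real E : mxIm (Sigma cst E) = 0.
Proof. by rewrite mxIm_Sigma big1 // => k _; rewrite !brRxx // addr0. Qed.

Lemma mxRe_Sigma_sub E : unitary_frame cst P H0 E -> (mxRe (Sigma cst E) <= L)%MS.
Proof.
have [_ [_ [_ [_ [brPP _]]]]] := cartan.
move=> [pplus _]; rewrite mxRe_Sigma summx_sub // => k _.
have [aP bP _ _] := pplus_parts (pplus k).
by rewrite addmx_sub ?eqmx_opp ?brPP.
Qed.

Lemma kilR_Sigma_H0 E : unitary_frame cst P H0 E ->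
  kilR cst (mxRe (Sigma cst E)) H0 = - p%:R.
Proof.
move=> [pplus unitary]; rewrite mxRe_Sigma linear_sumlz.
rewrite (eq_bigr (fun=> -1)) ?sumr_const ?card_ord -?mulNrn // => k _.
have [_ _ Ha Hb] := pplus_parts (pplus k).
have unit_k : kilR cst (mxRe (row k E)) (mxRe (row k E))
              + kilR cst (mxIm (row k E)) (mxIm (row k E)) = 1.
  by rewrite -Re_hermK_diag unitary eqxx.
rewrite linearBl /= !kilR_brR // (lie.1 _ H0) (lie.1 _ H0) !linearNr Ha Hb.
by rewrite !linearNr !opprK /= -unit_k opprD addrC.
Qed.

End CartanDecomposition.

Theorem lemma6 (R : rcfType) (n : nat) (cst : 'I_n -> 'I_n -> 'rV[R]_n)
    (L P : 'M[R]_n) (H0 : 'rV[R]_n) (p : nat) (A : 'M[R[i]]_(p, n)) (c : R) :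
  is_lie_algebra cst ->
  is_simple cst ->
  is_cartan_decomposition cst L P ->
  (0 < \rank P)%N ->
  is_H0 cst L P H0 ->
  unitary_frame cst P H0 A ->
  Sigma cst A = (toC c) *: mapC H0 ->
  forall B : 'M[R[i]]_(p, n), unitary_frame cst P H0 B ->
    normsq_gl cst (Sigma cst A) <= normsq_gl cst (Sigma cst B).
Proof.
move=> lie _ cartan _ _ frameA SigmaA B frameB.
have ReA : mxRe (Sigma cst A) = c *: H0.
  by rewrite SigmaA (mxRe_scale_toC c (mapC H0)) mxRe_mapC.
rewrite (normsq_gl_real _ (Sigma_real lie A)) (normsq_gl_real _ (Sigma_real lie B)).
rewrite lecR lerN2; apply: (kilR_le_orthogonal cartan).
  have [ReA_L ReB_L] := (mxRe_Sigma_sub cartan frameA, mxRe_Sigma_sub cartan frameB).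
  by rewrite addmx_sub ?eqmx_opp.
rewrite {2}ReA linearZr_LR linearBl /=.
by rewrite (kilR_Sigma_H0 lie frameA) (kilR_Sigma_H0 lie frameB) subrr mulr0.
Qed.
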